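(* Let $A\in\mathbb{C}^{n\times n}$, and fix $A^-\in A\{1\}$ and $A^{GD}\in A\{GD\}$. Then $A^{-}AA^{GD}$ is the $(A^{-}A,\,AA^{GD})$-inverse of $A$.
   Context: For $A\in\mathbb{C}^{n\times n}$, $ind(A)$ is the smallest nonnegative integer $k$ with $\mathrm{rank}(A^k)=\mathrm{rank}(A^{k+1})$. $A\{1\}$ is the set of matrices $X$ with $AXA=A$. With $k=ind(A)$, $A\{GD\}$ is the set of G-Drazin inverses of $A$: matrices $X$ with $AXA=A$, $XA^{k+1}=A^k$, $A^{k+1}X=A^k$. For $A,B,C\in\mathbb{C}^{n\times n}$, a matrix $X$ is the $(B,C)$-inverse of $A$ if $XAB=B$, $CAX=C$, $N(C)\subseteq N(X)$ and $R(X)\subseteq R(B)$; $R(\cdot)$, $N(\cdot)$ denote range and null space. *)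

From HB Require Import structures.
From mathcomp Require Import all_boot all_order all_algebra.
From mathcomp Require Import complex.
Set Implicit Arguments. Unset Strict Implicit. Unset Printing Implicit Defensive.
Import GRing.Theory.
Local Open Scope ring_scope.

(* ind(A): smallest k >= 0 with rank(A^k) = rank(A^(k+1)).  Such a k always
   exists and is <= n, so searching in 0..n gives exactly that k. *)
Definition mxindex (F : fieldType) (n : nat) (A : 'M[F]_n) : nat :=
  find (fun k => \rank (A ^+ k) == \rank (A ^+ k.+1)) (iota 0 n.+1).

Definition inner_inverse (F : fieldType) (n : nat) (A X : 'M[F]_n) : Prop :=
  A *m X *m A = A.

Definition gdrazin_inverse (F : fieldType) (n : nat) (A X : 'M[F]_n) : Prop :=
  let k := mxindex A in
  [/\ A *m X *m A = A, X *m A ^+ k.+1 = A ^+ k & A ^+ k.+1 *m X = A ^+ k].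

Definition nullsp_sub (F : fieldType) (n : nat) (C X : 'M[F]_n) : Prop :=
  forall v : 'cV[F]_n, C *m v = 0 -> X *m v = 0.

Definition range_sub (F : fieldType) (n : nat) (X B : 'M[F]_n) : Prop :=
  forall v : 'cV[F]_n, exists w : 'cV[F]_n, X *m v = B *m w.

Definition BC_inverse (F : fieldType) (n : nat) (A B C X : 'M[F]_n) : Prop :=
  [/\ X *m A *m B = B, C *m A *m X = C, nullsp_sub C X & range_sub X B].

From HB Require Import structures.
From mathcomp Require Import all_boot all_order all_algebra.
From mathcomp Require Import complex.
Set Implicit Arguments. Unset Strict Implicit. Unset Printing Implicit Defensive.
Local Open Scope ring_scope.

(* Only the inner-inverse property of A^GD matters: for any two inner inverses
   X, Y of A, the identities A X A = A = A Y A collapse (XAY) A (XA) to XA and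
   (AY) A (XAY) to AY, while N(AY) ⊆ N(X(AY)) and R((XA)Y) ⊆ R(XA) are
   immediate from the factorisations of XAY. *)

Section InnerInverses.

Variables (F : fieldType) (n : nat).
Implicit Types A B C X Y : 'M[F]_n.

Lemma gdrazin_inverse_inner A X : gdrazin_inverse A X -> inner_inverse A X.
Proof. by case. Qed.

Lemma nullsp_sub_mull B C : nullsp_sub C (B *m C).
Proof. by move=> v Cv0; rewrite -mulmxA Cv0 mulmx0. Qed.

Lemma range_sub_mulr B C : range_sub (B *m C) B.
Proof. by move=> v; exists (C *m v); rewrite mulmxA. Qed.

Lemma inner_inverses_BC_inverse A X Y :
  inner_inverse A X -> inner_inverse A Y ->
  BC_inverse A (X *m A) (A *m Y) (X *m A *m Y).
Proof.
rewrite /inner_inverse => AXA AYA; split.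
- by rewrite !mulmxA -(mulmxA X) -(mulmxA X) AYA -(mulmxA X) -(mulmxA X) AXA.
- by rewrite !mulmxA AYA AXA.
- by rewrite -mulmxA; exact: nullsp_sub_mull.
- exact: range_sub_mulr.
Qed.

End InnerInverses.

Theorem theorem3p10 (R : rcfType) (n : nat) (A Am Agd : 'M[R[i]]_n) :
  inner_inverse A Am -> gdrazin_inverse A Agd ->
  BC_inverse A (Am *m A) (A *m Agd) (Am *m A *m Agd).
Proof.
by move=> AmA /gdrazin_inverse_inner AgdA; exact: inner_inverses_BC_inverse.
Qed.
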